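(* Let $G$ be a simple graph on the node set $[d]$. Then the graph associahedron $\Delta_{\mathcal{B}(G)}$ is inscribed if and only if $G$ is a disjoint union of complete graphs.
   Context: The graphical building set $\mathcal{B}(G)$ consists of all nonempty $I\subseteq[d]$ such that the induced subgraph $G[I]$ is connected. For $I\subseteq[d]$, $\Delta_I=\mathrm{conv}(e_i:i\in I)$ and $\Delta_{\mathcal{B}(G)}=\sum_{I\in\mathcal{B}(G)}\Delta_I$ (Minkowski sum). A polytope is inscribed if all its vertices lie on a common sphere. *)

From HB Require Import structures.
From mathcomp Require Import all_boot all_order all_algebra.
From mathcomp Require Import reals.
Set Implicit Arguments. Unset Strict Implicit. Unset Printing Implicit Defensive.
Import Order.TTheory GRing.Theory Num.Theory.
Local Open Scope ring_scope.

Definition simple_graph (d : nat) (e : rel 'I_d) : Prop :=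
  symmetric e /\ irreflexive e.

Definition induced (d : nat) (e : rel 'I_d) (I : {set 'I_d}) : rel 'I_d :=
  fun x y => [&& e x y, x \in I & y \in I].

Definition connected_induced (d : nat) (e : rel 'I_d) (I : {set 'I_d}) : bool :=
  (I != set0) && [forall x in I, forall y in I, connect (induced e I) x y].

Definition building_set (d : nat) (e : rel 'I_d) : {set {set 'I_d}} :=
  [set I : {set 'I_d} | connected_induced e I].

Definition std_basis (R : realType) (d : nat) (i : 'I_d) : 'rV[R]_d :=
  delta_mx 0 i.

Definition simplex_face (R : realType) (d : nat) (I : {set 'I_d}) : 'rV[R]_d -> Prop :=
  fun x => exists lam : 'I_d -> R,
    (forall i, i \in I -> 0 <= lam i) /\ \sum_(i in I) lam i = 1 /\
    x = \sum_(i in I) lam i *: std_basis R i.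

Definition minkowski_sum (R : realType) (d : nat) (B : {set {set 'I_d}})
  (P : {set 'I_d} -> 'rV[R]_d -> Prop) : 'rV[R]_d -> Prop :=
  fun x => exists p : {set 'I_d} -> 'rV[R]_d,
    (forall I, I \in B -> P I (p I)) /\ x = \sum_(I in B) p I.

Definition graph_associahedron (R : realType) (d : nat) (e : rel 'I_d) : 'rV[R]_d -> Prop :=
  minkowski_sum (building_set e) (@simplex_face R d).

Definition is_vertex (R : realType) (d : nat) (P : 'rV[R]_d -> Prop) (v : 'rV[R]_d) : Prop :=
  P v /\ forall x y (t : R), P x -> P y -> 0 < t < 1 ->
    v = t *: x + (1 - t) *: y -> x = y.

Definition sqdist (R : realType) (d : nat) (x y : 'rV[R]_d) : R :=
  \sum_(i < d) (x 0 i - y 0 i) ^+ 2.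

Definition inscribed (R : realType) (d : nat) (P : 'rV[R]_d -> Prop) : Prop :=
  exists (c : 'rV[R]_d) (r : R), forall v, is_vertex P v -> sqdist v c = r.

(* G is a disjoint union of complete graphs: each connected component is a clique *)
Definition disjoint_union_of_cliques (d : nat) (e : rel 'I_d) : Prop :=
  forall x y : 'I_d, x != y -> connect e x y -> e x y.

(* The vertices of a Minkowski sum of simplices [Delta_I], [I] in [B], are the sums of
   basis vectors [e_(f I)] for compatible choices [f I \in I]: if [f I \in J] and
   [f J \in I] then [f I = f J], since otherwise moving mass in opposite directions
   splits the vertex.  Hence the squared norm of a vertex counts the pairs [(I, J)] with
   [f I = f J]; when [B] is closed under unions of intersecting members this is the sum
   over [U] in [B] of the number of pairs [(I, J)] with union [U] and [f U \in I :&: J].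
   If [G] is a disjoint union of cliques, [B] is the set of nonempty cliques and a
   transposition inside a clique is a graph automorphism, so that number does not
   depend on the choice of [f U] in [U]: all vertices lie on a sphere around 0.
   Conversely, an induced path [a - b - c] yields four vertices, maximising linear
   functionals that rank [a], [b], [c] in four different orders below every other node;
   they differ only at [a], [b], [c], and no point is equidistant from all four. *)

From HB Require Import structures.
From mathcomp Require Import all_boot all_order all_algebra perm.
From mathcomp Require Import boolp reals.
From mathcomp Require Import ring lra.
Set Implicit Arguments. Unset Strict Implicit. Unset Printing Implicit Defensive.
Import Order.TTheory GRing.Theory Num.Theory.
Local Open Scope ring_scope.

Lemma sumr_delta (R : pzRingType) (T : finType) (F : T -> R) (P : pred T) j :
  \sum_(i | P i) F i * (i == j)%:R = if P j then F j else 0.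
Proof.
rewrite big_mkcond (bigD1 j) //= big1 ?addr0.
  by case: (P j); rewrite ?eqxx ?mulr1.
by move=> i /negbTE ->; rewrite mulr0 if_same.
Qed.

Lemma sumr_delta1 (R : pzRingType) (T : finType) (j : T) :
  \sum_i (j == i)%:R = 1 :> R.
Proof.
under eq_bigr do rewrite eq_sym -[_%:R]mul1r.
by rewrite sumr_delta.
Qed.

Lemma sum_update (V : nmodType) (T : finType) (A : {pred T}) (p : T -> V) t u :
  t \in A -> \sum_(s in A) (if s == t then p t + u else p s) = \sum_(s in A) p s + u.
Proof.
move=> tA; rewrite (bigD1 t) //= eqxx [in RHS](bigD1 t) //= addrAC; congr (_ + _ + _).
by apply: eq_bigr => s /andP[_ /negbTE->].
Qed.

Lemma sum_powersetU1 (V : nmodType) (T : finType) (x : T) (A : {set T})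
    (F : {set T} -> V) :
  x \notin A ->
  \sum_(I in powerset (x |: A)) F I = \sum_(I in powerset A) (F I + F (x |: I)).
Proof.
move=> xNA; rewrite big_split (bigID (fun I : {set T} => x \in I)) /= addrC; congr (_ + _).
  apply: eq_bigl => I; rewrite !powersetE; apply/andP/idP => [[IxA xNI] | IA].
    apply/subsetP => y yI; move: (subsetP IxA y yI); rewrite !inE.
    by case: eqP yI => [-> xI | _ _ //]; rewrite xI in xNI.
  by rewrite (subset_trans IA (subsetU1 x A)) (contra (subsetP IA x)).
rewrite (reindex_onto (fun J : {set T} => x |: J) (fun I => I :\ x)) /=; last first.
  by move=> I /andP[_ xI]; rewrite setD1K.
apply: eq_bigl => J; rewrite !powersetE setU11 andbT.
apply/andP/idP => [[xJA /eqP <-] | JA].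
  by apply/subsetP => y /setD1P[yx yxJ]; move: (subsetP xJA y yxJ); rewrite !inE (negbTE yx).
have xNJ : x \notin J := contra (subsetP JA x) xNA.
by rewrite setUS // setU1K.
Qed.

Section SimplexFace.
Variables (R : realType) (d : nat).
Implicit Types (I : {set 'I_d}) (i j k : 'I_d) (x q : 'rV[R]_d).

Lemma std_basisE i j : std_basis R i 0 j = (i == j)%:R.
Proof. by rewrite /std_basis mxE eqxx eq_sym. Qed.

Lemma simplex_faceP I x : simplex_face I x <->
  [/\ forall i, 0 <= x 0 i, forall i, i \notin I -> x 0 i = 0 & \sum_i x 0 i = 1].
Proof.
split=> [[lam [lam_ge0 [lam_sum1 ->]]] | [x_ge0 x_out x_sum1]].
  have xE j : (\sum_(i in I) lam i *: std_basis R i) 0 j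
      = if j \in I then lam j else 0.
    by rewrite summxE -(sumr_delta lam); apply: eq_bigr => i _; rewrite mxE std_basisE.
  split=> [i | i /negbTE iNI | ]; rewrite ?xE ?iNI //.
    by case: ifP => // /lam_ge0.
  by under eq_bigr do rewrite xE; rewrite -big_mkcond.
exists (fun i => x 0 i); split=> [i _ | ]; first exact: x_ge0.
split.
  by rewrite -x_sum1 [RHS](bigID (mem I)) /= [X in _ + X]big1 ?addr0.
apply/rowP => j; rewrite summxE.
under eq_bigr do rewrite mxE std_basisE.
by rewrite sumr_delta; case: ifP => // /negbT /x_out.
Qed.

Lemma simplex_face_basis I i : i \in I -> simplex_face I (std_basis R i).
Proof.
move=> iI; apply/simplex_faceP; split=> [j | j jNI | ]; rewrite ?std_basisE.
- exact: ler0n.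
- by case: eqP jNI => // <-; rewrite iI.
- by under eq_bigr do rewrite std_basisE; rewrite sumr_delta1.
Qed.

Lemma simplex_face_shift I q j k (eps : R) :
  simplex_face I q -> j \in I -> k \in I -> j != k -> 0 <= eps <= q 0 j ->
  simplex_face I (q + eps *: (std_basis R k - std_basis R j)).
Proof.
move=> /simplex_faceP[q_ge0 q_out q_sum1] jI kI jk /andP[eps_ge0 eps_le].
have qE i : (q + eps *: (std_basis R k - std_basis R j)) 0 i
    = q 0 i + eps * ((k == i)%:R - (j == i)%:R).
  by rewrite !mxE eqxx /= (eq_sym i k) (eq_sym i j).
apply/simplex_faceP; split=> [i | i iNI | ]; rewrite ?qE.
- case: (eqVneq j i) => [<- | ji].
    by rewrite eq_sym (negbTE jk) sub0r mulrN1 subr_ge0.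
  by rewrite subr0 addr_ge0 ?mulr_ge0.
- have /negbTE-> : k != i by apply: contraNneq iNI => <-.
  have /negbTE-> : j != i by apply: contraNneq iNI => <-.
  by rewrite q_out // subrr mulr0 addr0.
- under eq_bigr do rewrite qE.
  rewrite big_split /= q_sum1 -mulr_sumr sumrB.
  by rewrite !sumr_delta1 subrr mulr0 addr0.
Qed.

End SimplexFace.

Lemma sqdistDl (R : realType) (d : nat) (x u z : 'rV[R]_d) :
  sqdist (x + u) z = sqdist x z + \sum_i u 0 i * (2 * (x 0 i - z 0 i) + u 0 i).
Proof. by rewrite /sqdist -big_split; apply: eq_bigr => i _ /=; rewrite mxE; ring. Qed.

Lemma sqdist_sum_basis0 (R : realType) (d : nat) (T : finType) (A : {pred T}) (g : T -> 'I_d) :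
  sqdist (\sum_(t in A) std_basis R (g t)) 0
  = \sum_(s in A) \sum_(t in A) (g s == g t)%:R.
Proof.
rewrite /sqdist; under eq_bigr do rewrite mxE subr0 summxE expr2 mulr_suml.
under eq_bigr do under eq_bigr do rewrite mulr_sumr.
rewrite exchange_big; apply: eq_bigr => s _; rewrite exchange_big.
apply: eq_bigr => t _.
by under eq_bigr do rewrite !std_basisE (eq_sym (g t)); rewrite sumr_delta.
Qed.

Section MinkowskiSumOfSimplices.
Variables (R : realType) (d : nat) (B : {set {set 'I_d}}).
Implicit Types (I J : {set 'I_d}) (i j k : 'I_d) (w : 'I_d -> R) (x y z : 'rV[R]_d).
Local Notation P := (minkowski_sum B (@simplex_face R d)).

Definition wdot w x := \sum_i w i * x 0 i.

Lemma wdot_sum w (T : finType) (A : {pred T}) (p : T -> 'rV[R]_d) :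
  wdot w (\sum_(t in A) p t) = \sum_(t in A) wdot w (p t).
Proof.
rewrite /wdot; under eq_bigr do rewrite summxE mulr_sumr.
exact: exchange_big.
Qed.

Lemma wdotD w x y : wdot w (x + y) = wdot w x + wdot w y.
Proof. by rewrite /wdot -big_split; apply: eq_bigr => i _; rewrite mxE mulrDr. Qed.

Lemma wdotZ w t x : wdot w (t *: x) = t * wdot w x.
Proof. by rewrite /wdot mulr_sumr; apply: eq_bigr => i _; rewrite mxE mulrCA. Qed.

Lemma wdot_basis w i : wdot w (std_basis R i) = w i.
Proof. by rewrite /wdot; under eq_bigr do rewrite std_basisE eq_sym; rewrite sumr_delta. Qed.

Lemma wdot_simplex_face_max w I m z : m \in I ->
  (forall j, j \in I -> j != m -> w j < w m) -> simplex_face I z ->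
  wdot w z <= w m /\ (wdot w z = w m -> z = std_basis R m).
Proof.
move=> mI w_lt /simplex_faceP[z_ge0 z_out z_sum1].
have gapE : w m - wdot w z = \sum_i (w m - w i) * z 0 i.
  rewrite /wdot -[X in X - _]mulr1 -z_sum1 mulr_sumr -sumrB.
  by apply: eq_bigr => i _; rewrite mulrBl.
have gap_ge0 i : 0 <= (w m - w i) * z 0 i.
  have [iI | /z_out->] := boolP (i \in I); last by rewrite mulr0.
  rewrite mulr_ge0 // subr_ge0; case: (eqVneq i m) => [-> // | im].
  exact/ltW/w_lt.
split=> [| w_eq]; first by rewrite -subr_ge0 gapE sumr_ge0.
have /(psumr_eq0P (fun i _ => gap_ge0 i)) gap0 : \sum_i (w m - w i) * z 0 i = 0.
  by rewrite -gapE w_eq subrr.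
have z0 i : i != m -> z 0 i = 0.
  move=> im; have [iI | /z_out //] := boolP (i \in I).
  move/eqP: (gap0 i isT); rewrite mulf_eq0 subr_eq0.
  by case/orP=> [/eqP wmi | /eqP //]; move: (w_lt i iI im); rewrite wmi ltxx.
apply/rowP => i; rewrite std_basisE; case: (eqVneq m i) => [<- | mi]; last first.
  by rewrite z0 // eq_sym.
by rewrite -z_sum1 (bigD1 m) //= big1 ?addr0 // => j /z0.
Qed.

Lemma is_vertex_argmax w (f : {set 'I_d} -> 'I_d) :
  (forall I, I \in B -> f I \in I /\ forall j, j \in I -> j != f I -> w j < w (f I)) ->
  is_vertex P (\sum_(I in B) std_basis R (f I)).
Proof.
move=> f_max; set v := \sum_(I in B) _.
have wdot_v : wdot w v = \sum_(I in B) w (f I).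
  by rewrite wdot_sum; under eq_bigr do rewrite wdot_basis.
have v_max x : P x -> wdot w x <= wdot w v /\ (wdot w x = wdot w v -> x = v).
  move=> [p [p_face ->]]; rewrite wdot_sum wdot_v.
  have face_max I : I \in B -> wdot w (p I) <= w (f I) /\
      (wdot w (p I) = w (f I) -> p I = std_basis R (f I)).
    move=> IB; case: (f_max I IB) => fI w_lt.
    exact: wdot_simplex_face_max fI w_lt (p_face I IB).
  split=> [| sum_eq]; first by apply: ler_sum => I /face_max[].
  have gap_ge0 I : I \in B -> 0 <= w (f I) - wdot w (p I).
    by move=> /face_max[]; rewrite subr_ge0.
  have /(psumr_eq0P gap_ge0) gap0 : \sum_(I in B) (w (f I) - wdot w (p I)) = 0.
    by rewrite sumrB sum_eq subrr.
  apply: eq_bigr => I IB; apply: (face_max I IB).2.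
  by apply/eqP; rewrite eq_sym -subr_eq0 gap0.
split=> [| x y t Px Py /andP[t_gt0 t_lt1] vE].
  exists (fun I => std_basis R (f I)); split=> // I IB.
  by apply: simplex_face_basis; case: (f_max I IB).
have := congr1 (wdot w) vE; rewrite wdotD !wdotZ => wv.
have [wx_le xv] := v_max x Px; have [wy_le yv] := v_max y Py.
have [wx_eq wy_eq] : wdot w x = wdot w v /\ wdot w y = wdot w v.
  by split; nra.
by rewrite xv // yv.
Qed.

(* Otherwise shifting mass from [j] to [k] in [p I] and back from [k] to [j] in [p J]
   writes [v] as the midpoint of two distinct points of [P]. *)
Lemma vertex_exchange v (p : {set 'I_d} -> 'rV[R]_d) :
  is_vertex P v -> (forall I, I \in B -> simplex_face I (p I)) ->
  v = \sum_(I in B) p I ->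
  forall I J j k, I \in B -> J \in B -> k \in I -> j \in J ->
  0 < p I 0 j -> 0 < p J 0 k -> j = k.
Proof.
move=> [_ v_extreme] p_face vE I J j k IB JB kI jJ pIj_gt0 pJk_gt0.
apply/eqP/negPn/negP => jk.
have /simplex_faceP[_ pI_out _] := p_face I IB.
have /simplex_faceP[_ pJ_out _] := p_face J JB.
have jI : j \in I by apply: contraLR pIj_gt0 => /pI_out->; rewrite ltxx.
have kJ : k \in J by apply: contraLR pJk_gt0 => /pJ_out->; rewrite ltxx.
pose eps := Num.min (p I 0 j) (p J 0 k).
have eps_gt0 : 0 < eps by rewrite lt_min pIj_gt0.
have eps_ge0 := ltW eps_gt0.
pose u := eps *: (std_basis R k - std_basis R j).
have Pvu : P (v + u).
  exists (fun K => if K == I then p I + u else p K); rewrite sum_update // -vE.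
  split=> // K KB; case: eqP => [-> | _]; last exact: p_face.
  by apply: simplex_face_shift (p_face I IB) jI kI jk _; rewrite eps_ge0 ge_min lexx.
have Pv_u : P (v - u).
  have uN : - u = eps *: (std_basis R j - std_basis R k) by rewrite -scalerN opprB.
  exists (fun K => if K == J then p J - u else p K); rewrite sum_update // -vE.
  split=> // K KB; case: eqP => [-> | _]; last exact: p_face.
  rewrite uN; apply: simplex_face_shift (p_face J JB) kJ jJ _ _; first by rewrite eq_sym.
  by rewrite eps_ge0 ge_min lexx orbT.
have /rowP/(_ k) : v + u = v - u.
  apply: v_extreme (1 / 2) Pvu Pv_u _ _; first by apply/andP; split; lra.
  by apply/rowP => i; rewrite !mxE; field.
rewrite !mxE !eqxx eq_sym (negbTE jk) /= => vk_eq.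
by clearbody eps; clear -vk_eq eps_gt0; lra.
Qed.

Lemma vertex_choice (x0 : 'I_d) v : is_vertex P v ->
  exists f : {set 'I_d} -> 'I_d,
  [/\ forall I, I \in B -> f I \in I,
      forall I J, I \in B -> J \in B -> f I \in J -> f J \in I -> f I = f J
    & v = \sum_(I in B) std_basis R (f I)].
Proof.
move=> v_vertex; have [[p [p_face vE]] _] := v_vertex.
have exchange := vertex_exchange v_vertex p_face vE.
pose f I := odflt x0 [pick i | 0 < p I 0 i].
have f_spec I : I \in B -> [/\ f I \in I, 0 < p I 0 (f I) & p I = std_basis R (f I)].
  move=> IB; have /simplex_faceP[p_ge0 p_out p_sum1] := p_face I IB.
  rewrite /f; case: pickP => [i pi_gt0 | p_le0] /=; last first.
    have : \sum_i p I 0 i = 0.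
      by apply: big1 => i _; apply/eqP; rewrite eq_le p_ge0 leNgt p_le0.
    by rewrite p_sum1 => /eqP; rewrite oner_eq0.
  have iI : i \in I by apply: contraLR pi_gt0 => /p_out->; rewrite ltxx.
  have p0 j : j != i -> p I 0 j = 0.
    move=> ji; apply/eqP; rewrite eq_le p_ge0 andbT leNgt; apply: contra ji => pj_gt0.
    have jI : j \in I by apply: contraLR pj_gt0 => /p_out->; rewrite ltxx.
    by rewrite (exchange I I j i IB IB iI jI pj_gt0 pi_gt0).
  split=> //; apply/rowP => j; rewrite std_basisE.
  case: (eqVneq i j) => [<- | ij]; last by rewrite p0 // eq_sym.
  by rewrite -p_sum1 (bigD1 i) //= big1 ?addr0 // => j /p0.
exists f; split=> [I /f_spec[] // | I J IB JB fIJ fJI | ].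
  have [_ pIf_gt0 _] := f_spec I IB; have [_ pJf_gt0 _] := f_spec J JB.
  exact: exchange fJI fIJ pIf_gt0 pJf_gt0.
by rewrite vE; apply: eq_bigr => I /f_spec[].
Qed.

End MinkowskiSumOfSimplices.

Lemma inscribed_of_equidistant (R : realType) (d : nat) (P : 'rV[R]_d -> Prop) c :
  (forall v v', is_vertex P v -> is_vertex P v' -> sqdist v c = sqdist v' c) ->
  inscribed P.
Proof.
move=> equidistant; exists c.
have [[v0 v0_vertex] | no_vertex] := pselect (exists v, is_vertex P v).
  by exists (sqdist v0 c) => v /equidistant; apply.
by exists 0 => v v_vertex; case: no_vertex; exists v.
Qed.

Section BuildingSet.
Variables (d : nat) (e : rel 'I_d).
Implicit Types (I J : {set 'I_d}) (x y h : 'I_d).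
Local Notation B := (building_set e).

Lemma building_set_neq0 I : I \in B -> I != set0.
Proof. by rewrite inE => /andP[]. Qed.

Lemma building_set0 : (set0 \in B) = false.
Proof. by rewrite inE /connected_induced eqxx. Qed.

Lemma building_set1 x : [set x] \in B.
Proof.
rewrite inE /connected_induced; apply/andP; split.
  by apply/set0Pn; exists x; rewrite inE.
by apply/forall_inP => y /set1P-> ; apply/forall_inP => z /set1P->; exact: connect0.
Qed.

Lemma connect_building_set I x y : I \in B -> x \in I -> y \in I -> connect e x y.
Proof.
rewrite inE => /andP[_ /forall_inP I_conn] xI yI.
apply: connect_sub (forall_inP (I_conn x xI) y yI) => u v /andP[uv _].
exact: connect1.
Qed.

Lemma building_set_neighbor I x y : I \in B -> x \in I -> y \in I -> x != y ->
  exists2 z, z \in I & e x z.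
Proof.
rewrite inE => /andP[_ /forall_inP I_conn] xI yI xy.
case/connectP: (forall_inP (I_conn x xI) y yI) => -[/= _ yx | z p /=].
  by rewrite yx eqxx in xy.
by case/andP=> /and3P[xz _ zI] _ _; exists z.
Qed.

Lemma building_set_star I h : symmetric e ->
  h \in I -> (forall x, x \in I -> (x == h) || e h x) -> I \in B.
Proof.
move=> e_sym hI h_adj; rewrite inE /connected_induced.
have -> : I != set0 by apply/set0Pn; exists h.
have to_h x : x \in I -> connect (induced e I) x h.
  move=> xI; case/orP: (h_adj x xI) => [/eqP-> | hx]; first exact: connect0.
  by apply: connect1; rewrite /induced e_sym hx xI hI.
have sym_conn : connect_sym (induced e I).
  by apply: sym_connect_sym => x y; rewrite /induced e_sym [(x \in I) && _]andbC.
apply/forall_inP => x xI; apply/forall_inP => y yI.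
by apply: connect_trans (to_h x xI) _; rewrite sym_conn; exact: to_h.
Qed.

Lemma cliques_of_transitive :
  (forall x y z, e x y -> e y z -> x != z -> e x z) -> disjoint_union_of_cliques e.
Proof.
move=> e_trans x y xy /connectP[p]; elim: p x xy => [|z p IHp] x xy /=.
  by move=> _ yx; rewrite yx eqxx in xy.
case/andP=> xz zp yE; have [zy | zy] := eqVneq z y; first by rewrite -zy.
exact: e_trans xz (IHp z zy zp yE) xy.
Qed.
End BuildingSet.

Section Cliques.
Variables (R : realType) (d : nat) (e : rel 'I_d).
Hypotheses (e_sym : symmetric e) (e_irr : irreflexive e).
Hypothesis e_cliques : disjoint_union_of_cliques e.
Implicit Types (I J U : {set 'I_d}) (x y m : 'I_d).
Local Notation B := (building_set e).
Local Notation P := (@graph_associahedron R d e).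

Lemma edge_connect x y : e x y = (x != y) && connect e x y.
Proof.
apply/idP/andP => [xy | [/e_cliques]]; last by apply.
by split; [apply: contraTneq xy => ->; rewrite e_irr | exact: connect1].
Qed.

Lemma building_set_clique I x y : I \in B -> x \in I -> y \in I -> x != y -> e x y.
Proof. by move=> IB xI yI xy; rewrite edge_connect xy (connect_building_set IB). Qed.

Lemma building_set_of_clique I : I != set0 ->
  (forall x y, x \in I -> y \in I -> x != y -> e x y) -> I \in B.
Proof.
case/set0Pn=> h hI I_clique; apply: (building_set_star e_sym hI) => x xI.
by case: (eqVneq x h) => //= xh; apply: I_clique; rewrite // eq_sym.
Qed.

Lemma building_setU I J m : I \in B -> J \in B -> m \in I -> m \in J ->
  I :|: J \in B.
Proof.
move=> IB JB mI mJ; apply: building_set_of_clique => [|x y].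
  by apply/set0Pn; exists m; rewrite inE mI.
have to_m z : z \in I :|: J -> connect e z m.
  by rewrite inE => /orP[zI | zJ]; [exact: connect_building_set IB zI mI
                                   | exact: connect_building_set JB zJ mJ].
move=> xU yU xy; rewrite edge_connect xy (connect_trans (to_m x xU)) //.
by rewrite (sym_connect_sym e_sym) to_m.
Qed.

Lemma mem_imset_tperm m m' I y :
  (y \in tperm m m' @: I) = (tperm m m' y \in I).
Proof. by rewrite -{1}[y](tpermK m m') mem_imset //; exact: perm_inj. Qed.

Lemma edge_tperm m m' x y : connect e m m' ->
  e (tperm m m' x) (tperm m m' y) = e x y.
Proof.
move=> mm'; have e_csym := sym_connect_sym e_sym.
have to_tperm z : connect e z (tperm m m' z).
  by case: tpermP => [-> // | -> | _ _]; [rewrite e_csym | exact: connect0].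
have from_tperm z : connect e (tperm m m' z) z by rewrite e_csym.
rewrite !edge_connect (inj_eq perm_inj); congr (_ && _); apply/idP/idP => conn.
  exact: connect_trans (connect_trans (to_tperm x) conn) (from_tperm y).
exact: connect_trans (connect_trans (from_tperm x) conn) (to_tperm y).
Qed.

Lemma building_set_tperm m m' I : connect e m m' ->
  (tperm m m' @: I \in B) = (I \in B).
Proof.
move=> mm'; suff imB J : J \in B -> tperm m m' @: J \in B.
  apply/idP/idP => [/imB | /imB //].
  by rewrite -imset_comp (eq_imset _ (tpermK m m')) imset_id.
move=> JB; apply: building_set_of_clique => [|x y].
  case/set0Pn: (building_set_neq0 JB) => x xJ; apply/set0Pn.
  by exists (tperm m m' x); rewrite mem_imset_tperm tpermK.
rewrite !mem_imset_tperm => xJ yJ xy; rewrite -(edge_tperm _ _ mm').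
by apply: building_set_clique JB xJ yJ _; rewrite (inj_eq perm_inj).
Qed.

Definition pair_count U m : R :=
  \sum_(I in B) \sum_(J in B) ((I :|: J == U) && (m \in I) && (m \in J))%:R.

(* The transposition of two elements of [U] is a graph automorphism fixing [U]. *)
Lemma pair_count_indep U m m' : U \in B -> m \in U -> m' \in U ->
  pair_count U m = pair_count U m'.
Proof.
move=> UB mU m'U; have mm' := connect_building_set UB mU m'U.
have im_inj : injective (fun I => tperm m m' @: I) by apply: imset_inj; exact: perm_inj.
have im_U : tperm m m' @: U = U.
  apply/setP => y; rewrite mem_imset_tperm.
  by case: tpermP => [-> | -> | _ _]; rewrite ?mU ?m'U.
rewrite /pair_count (reindex_inj im_inj) /=.
under eq_bigl do rewrite building_set_tperm //.
apply: eq_bigr => I _; rewrite (reindex_inj im_inj) /=.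
under eq_bigl do rewrite building_set_tperm //.
apply: eq_bigr => J _.
by rewrite -imsetU -{1}im_U (inj_eq im_inj) !mem_imset_tperm tpermL.
Qed.

Section CompatibleChoice.
Variable f : {set 'I_d} -> 'I_d.
Hypothesis f_mem : forall I, I \in B -> f I \in I.
Hypothesis f_compat :
  forall I J, I \in B -> J \in B -> f I \in J -> f J \in I -> f I = f J.

Lemma compatible_eq I J : I \in B -> J \in B ->
  (f I == f J) = [&& I :|: J \in B, f (I :|: J) \in I & f (I :|: J) \in J].
Proof.
move=> IB JB; have fI_U : f I \in I :|: J by rewrite inE f_mem.
have fJ_U : f J \in I :|: J by rewrite inE f_mem ?orbT.
apply/eqP/and3P => [fIJ | [UB fUI fUJ]]; last first.
  by rewrite -(f_compat UB IB fUI fI_U) (f_compat UB JB fUJ fJ_U).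
have fI_J : f I \in J by rewrite fIJ f_mem.
have UB := building_setU IB JB (f_mem IB) fI_J.
have fU : f (I :|: J) = f I.
  have := f_mem UB; rewrite inE => /orP[fUI | fUJ]; first exact: f_compat.
  by rewrite fIJ; exact: f_compat.
by rewrite fU fI_J f_mem.
Qed.

Lemma sqdist_compatible_choice :
  sqdist (\sum_(I in B) std_basis R (f I)) 0 = \sum_(U in B) pair_count U (f U).
Proof.
rewrite sqdist_sum_basis0 /pair_count [RHS]exchange_big; apply: eq_bigr => I IB.
rewrite [RHS]exchange_big; apply: eq_bigr => J JB; rewrite compatible_eq //.
transitivity (\sum_(U in B) ((f U \in I) && (f U \in J))%:R * (U == I :|: J)%:R : R).
  by rewrite sumr_delta; case: (_ \in B).
apply: eq_bigr => U _; rewrite eq_sym.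
by case: eqP; rewrite ?mulr1 ?mulr0.
Qed.

End CompatibleChoice.

Lemma vertices_equidistant v v' : is_vertex P v -> is_vertex P v' ->
  sqdist v 0 = sqdist v' 0.
Proof.
case: (ltnP 0 d) => [d_gt0 | d_le0] v_vertex v'_vertex; last first.
  by rewrite /sqdist !big1 // => i; have := leq_trans (ltn_ord i) d_le0.
have [f [f_mem f_compat ->]] := vertex_choice (Ordinal d_gt0) v_vertex.
have [f' [f'_mem f'_compat ->]] := vertex_choice (Ordinal d_gt0) v'_vertex.
rewrite !sqdist_compatible_choice //.
by apply: eq_bigr => U UB; apply: pair_count_indep; rewrite ?f_mem ?f'_mem.
Qed.

End Cliques.

Section InducedPath.
Variables (R : realType) (d : nat) (e : rel 'I_d).
Hypotheses (e_sym : symmetric e) (e_irr : irreflexive e).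
Variables a b c : 'I_d.
Hypotheses (eab : e a b) (ebc : e b c) (nac : ~~ e a c) (ac : a != c).
Implicit Types (I S : {set 'I_d}) (i j t : 'I_d) (w : 'I_d -> R).
Local Notation B := (building_set e).
Local Notation P := (@graph_associahedron R d e).

Let ab : a != b. Proof. by apply: contraTneq eab => ->; rewrite e_irr. Qed.
Let bc : b != c. Proof. by apply: contraTneq ebc => ->; rewrite e_irr. Qed.

Definition path3 : {set 'I_d} := [set a; b; c].
Local Notation T := path3.

Lemma sum_path3 (V : nmodType) (F : 'I_d -> V) :
  \sum_(t in T) F t = F a + F b + F c.
Proof.
rewrite /T -setUA big_setU1 /=; last by rewrite !inE negb_or ab.
by rewrite big_setU1 ?big_set1 ?addrA // inE.
Qed.

Lemma sum_building_subsets_path3 (V : nmodType) (G : {set 'I_d} -> V) :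
  \sum_(I in B | I \subset T) G I
  = G [set c] + G [set a] + G [set b] + G [set b; c] + G [set a; b] + G T.
Proof.
transitivity (\sum_(I in powerset T) (if I \in B then G I else 0)).
  rewrite big_mkcond [RHS]big_mkcond; apply: eq_bigr => I _.
  by rewrite powersetE; case: (I \in B); case: (I \subset T).
have star_b S : b \in S -> {subset S <= T} -> S \in B.
  move=> bS ST; apply: (building_set_star e_sym bS) => x /ST.
  by rewrite !inE -orbA => /or3P[/eqP-> | -> // | /eqP->]; rewrite ?ebc ?(e_sym b a) ?eab orbT.
have cNab : c \notin [set a; b] by rewrite !inE negb_or !(eq_sym c) ac bc.
have aNb : a \notin [set b] by rewrite inE.
have ac_notB : ([set a; c] \in B) = false.
  apply/negP => acB; have [z] := building_set_neighbor acB (set21 a c) (set22 a c) ac.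
  by rewrite !inE => /orP[] /eqP->; rewrite ?e_irr // (negbTE nac).
rewrite /T [X in powerset X]setUC (sum_powersetU1 _ cNab) (sum_powersetU1 _ aNb) powerset1.
rewrite big_setU1 ?big_set1 /=; last first.
  by rewrite inE eq_sym; apply/eqP => /setP/(_ b); rewrite !inE eqxx.
rewrite !setU0 !(setUC [set c]) building_set0 ac_notB !building_set1.
rewrite !star_b ?inE ?eqxx ?orbT // => [|x|x]; first by rewrite add0r addr0 !addrA.
  by rewrite !inE => /orP[]->; rewrite ?orbT.
by rewrite !inE => /orP[]->; rewrite ?orbT.
Qed.

(* [a] is only a junk default, used when [I] is empty. *)
Definition argmax_in w I : 'I_d := Order.arg_max (odflt a [pick i in I]) (mem I) w.

Lemma argmax_inP w I : I != set0 ->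
  argmax_in w I \in I /\ forall j, j \in I -> w j <= w (argmax_in w I).
Proof.
case/set0Pn=> y yI; rewrite /argmax_in; case: pickP => [i iI | /(_ y)] /=; last by rewrite yI.
by case: (arg_maxP w iI) => m mI m_max; split=> // j /m_max.
Qed.

Lemma argmax_in_eq w I x : x \in I -> (forall j, j \in I -> j != x -> w j < w x) ->
  argmax_in w I = x.
Proof.
move=> xI x_max; have [|mI m_max] := argmax_inP w (I := I); first by apply/set0Pn; exists x.
by apply/eqP; apply: contraTT (m_max x xI) => mx; rewrite -ltNge x_max // eq_sym.
Qed.

Lemma argmax_in_set1 w x : argmax_in w [set x] = x.
Proof. by apply: argmax_in_eq => [|j /set1P->]; rewrite ?set11 ?eqxx. Qed.

Definition rank_weight x1 x2 x3 i : R :=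
  if i == x1 then 2 else if i == x2 then 1 else if i == x3 then 0 else 3 + i%:R.

Lemma rank_weight_inj x1 x2 x3 : injective (rank_weight x1 x2 x3).
Proof.
move=> i j; rewrite /rank_weight.
have i_ge0 : 0 <= i%:R :> R := ler0n _ _; have j_ge0 : 0 <= j%:R :> R := ler0n _ _.
do ![case: eqP => [-> | _]] => //; try by move=> ij; exfalso; lra.
by move/addrI/eqP; rewrite eqr_nat => /eqP/val_inj.
Qed.

Lemma rank_weight_out x1 x2 x3 i : i \notin [set x1; x2; x3] ->
  rank_weight x1 x2 x3 i = 3 + i%:R.
Proof.
by rewrite /rank_weight !inE !negb_or => /andP[/andP[/negbTE-> /negbTE->] /negbTE->].
Qed.

Lemma rank_weight_in x1 x2 x3 i : i \in [set x1; x2; x3] -> rank_weight x1 x2 x3 i <= 2.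
Proof.
rewrite !inE => /orP[/orP[] | ] /eqP->; rewrite /rank_weight eqxx.
all: by do ?case: ifP => _; lra.
Qed.

Definition first_in x1 x2 x3 S := if x1 \in S then x1 else if x2 \in S then x2 else x3.

Lemma first_in_mem x1 x2 x3 S : first_in x1 x2 x3 S \in [set x1; x2; x3].
Proof. by rewrite /first_in !inE; do !case: ifP; rewrite eqxx ?orbT. Qed.

Lemma argmax_rank x1 x2 x3 S : S != set0 -> {subset S <= [set x1; x2; x3]} ->
  argmax_in (rank_weight x1 x2 x3) S = first_in x1 x2 x3 S.
Proof.
move=> /set0Pn[y yS] S_sub; rewrite /first_in.
have S_mem j : j \in S -> [|| j == x1, j == x2 | j == x3] by move/S_sub; rewrite !inE -orbA.
have notin_ne x j : x \notin S -> j \in S -> (j == x) = false.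
  by move=> xNS jS; apply: contraNF xNS => /eqP <-.
case: ifP => [x1S | /negbT x1NS].
  apply: argmax_in_eq => // j jS /negbTE jx1; rewrite /rank_weight eqxx jx1.
  case: ifP => jx2; first lra.
  by move: (S_mem j jS); rewrite jx1 jx2 /= => ->; lra.
case: ifP => [x2S | /negbT x2NS].
  apply: argmax_in_eq => // j jS /negbTE jx2.
  rewrite /rank_weight eqxx jx2 !(notin_ne x1) //.
  by move: (S_mem j jS); rewrite jx2 (notin_ne x1) //= => ->; lra.
have in_x3 j : j \in S -> j = x3.
  by move=> jS; move: (S_mem j jS); rewrite (notin_ne x1 j) // (notin_ne x2 j) //= => /eqP.
by apply: argmax_in_eq => [|j /in_x3->]; rewrite -?(in_x3 y yS) ?eqxx.
Qed.





Lemma argmax_rank_out x1 x2 x3 I j : [set x1; x2; x3] = T -> j \in I -> j \notin T ->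
  argmax_in (rank_weight x1 x2 x3) I = argmax_in (rank_weight a b c) I.
Proof.
move=> xT jI jNT; have I_neq0 : I != set0 by apply/set0Pn; exists j.
have [mI m_max] := argmax_inP (rank_weight x1 x2 x3) I_neq0.
set m := argmax_in _ I in mI m_max *.
have out_x i : i \notin T -> rank_weight x1 x2 x3 i = 3 + i%:R.
  by rewrite -xT; apply: rank_weight_out.
have mNT : m \notin T.
  apply/negP; rewrite -xT => /rank_weight_in m_le2.
  by move: (m_max j jI); rewrite out_x //; have := ler0n R j; lra.
symmetry; apply: argmax_in_eq => // i iI im.
rewrite (rank_weight_out mNT); have [iT | iNT] := boolP (i \in T).
  by have := rank_weight_in iT; have := ler0n R m; lra.
rewrite (rank_weight_out iNT) -!out_x // lt_neqAle m_max // andbT.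
by rewrite (inj_eq (@rank_weight_inj x1 x2 x3)).
Qed.

Definition rank_vertex x1 x2 x3 : 'rV[R]_d :=
  \sum_(I in B) std_basis R (argmax_in (rank_weight x1 x2 x3) I).

Lemma rank_vertex_is_vertex x1 x2 x3 : is_vertex P (rank_vertex x1 x2 x3).
Proof.
apply: (is_vertex_argmax (w := rank_weight x1 x2 x3)) => I IB.
have [mI m_max] := argmax_inP (rank_weight x1 x2 x3) (building_set_neq0 IB).
split=> // j jI jm; rewrite lt_neqAle m_max // andbT.
by rewrite (inj_eq (@rank_weight_inj x1 x2 x3)).
Qed.

Definition rank_vertex_out : 'rV[R]_d :=
  \sum_(I in B | ~~ (I \subset T)) std_basis R (argmax_in (rank_weight a b c) I).

Definition rank_vertex_in x1 x2 x3 : 'rV[R]_d :=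
  std_basis R c + std_basis R a + std_basis R b + std_basis R (first_in x1 x2 x3 [set b; c])
  + std_basis R (first_in x1 x2 x3 [set a; b]) + std_basis R x1.

Lemma rank_vertexE x1 x2 x3 : [set x1; x2; x3] = T ->
  rank_vertex x1 x2 x3 = rank_vertex_out + rank_vertex_in x1 x2 x3.
Proof.
move=> xT; rewrite /rank_vertex (bigID (fun I => I \subset T)) /= addrC; congr (_ + _).
  by apply: eq_bigr => I /andP[_ /subsetPn[j jI jNT]]; rewrite (argmax_rank_out xT jI jNT).
have x1T : x1 \in T by rewrite -xT !inE eqxx.
have b_neq0 S : b \in S -> S != set0 by move=> bS; apply/set0Pn; exists b.
rewrite sum_building_subsets_path3 !argmax_in_set1 !argmax_rank ?b_neq0 ?xT ?inE ?eqxx ?orbT //.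
  by rewrite /first_in x1T.
all: by move=> t; rewrite !inE => /orP[]->; rewrite ?orbT.
Qed.

Lemma rank_vertex_in_notin x1 x2 x3 i : [set x1; x2; x3] = T -> i \notin T ->
  rank_vertex_in x1 x2 x3 0 i = 0.
Proof.
move=> xT iNT; have ne p : p \in T -> (i == p) = false.
  by move=> pT; apply: contraNF iNT => /eqP->.
have first_T S : first_in x1 x2 x3 S \in T by rewrite -xT first_in_mem.
have x1T : x1 \in T by rewrite -xT !inE eqxx.
by rewrite !mxE eqxx /= !ne ?first_T ?x1T ?inE ?eqxx ?orbT // !addr0.
Qed.

Lemma sqdist_rank_vertex x1 x2 x3 z : [set x1; x2; x3] = T ->
  sqdist (rank_vertex x1 x2 x3) z = sqdist rank_vertex_out z
  + \sum_(t in T) rank_vertex_in x1 x2 x3 0 t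
                  * (2 * (rank_vertex_out 0 t - z 0 t) + rank_vertex_in x1 x2 x3 0 t).
Proof.
move=> xT; rewrite rank_vertexE // sqdistDl; congr (_ + _).
rewrite (bigID (mem T)) /= [X in _ + X]big1 ?addr0 // => i iNT.
by rewrite rank_vertex_in_notin // mul0r.
Qed.

(* For the orders abc, acb, cab and bac the coordinates of [rank_vertex_in] at
   (a, b, c) are (3,2,1), (3,1,2), (2,1,3) and (1,4,1): the first three vertices force
   the centre to lie on the diagonal direction, where the fourth one is farther away. *)
Theorem induced_path_not_inscribed : ~ inscribed P.
Proof.
case=> z [r on_sphere].
have sphere x1 x2 x3 : [set x1; x2; x3] = T ->
    sqdist rank_vertex_out z + \sum_(t in T) rank_vertex_in x1 x2 x3 0 t
      * (2 * (rank_vertex_out 0 t - z 0 t) + rank_vertex_in x1 x2 x3 0 t) = r.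
  by move=> xT; rewrite -sqdist_rank_vertex //; exact/on_sphere/rank_vertex_is_vertex.
have := sphere a b c erefl.
have := sphere a c b (setUAC _ _ _).
have := sphere c a b; rewrite (setUC [set c]) setUAC => /(_ erefl).
have := sphere b a c; rewrite (setUC [set b]) => /(_ erefl).
have neqF (x y : 'I_d) : x != y -> (x == y) = false /\ (y == x) = false.
  by move=> /negbTE xy; rewrite xy eq_sym xy.
have [ab' ba'] := neqF _ _ ab; have [ac' ca'] := neqF _ _ ac; have [bc' cb'] := neqF _ _ bc.
rewrite !sum_path3 /rank_vertex_in /first_in !mxE !inE !eqxx /= ab' ba' ac' ca' bc' cb' /=.
rewrite !eqxx ?ab' ?ba' ?ac' ?ca' ?bc' ?cb' /=.
move: (sqdist _ z) (rank_vertex_out 0 a - z 0 a).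
move: (rank_vertex_out 0 b - z 0 b) (rank_vertex_out 0 c - z 0 c).
by move=> yb yc S ya; lra.
Qed.

End InducedPath.

Theorem corollary4p21 (R : realType) (d : nat) (e : rel 'I_d) :
  simple_graph e ->
  (inscribed (@graph_associahedron R d e) <-> disjoint_union_of_cliques e).
Proof.
case=> e_sym e_irr; split=> [e_inscribed | e_cliques].
  apply: cliques_of_transitive => a b c eab ebc ac; apply/negPn/negP => nac.
  exact: (induced_path_not_inscribed (R := R) e_sym e_irr eab ebc nac ac e_inscribed).
exact/inscribed_of_equidistant/vertices_equidistant.
Qed.
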